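(* For $g\ge1$ and $n\ge1$, as modules over $\mathsf{Sp}(2g,2)$ we have $\Gamma(2g,2^n)/\Gamma(2g,2^n,2^{n+1})\cong U$ and $\Gamma(2g,2^n,2^{n+1})/\Gamma(2g,2^{n+1})\cong\Lambda^2(U)$.
   Context: $\mathsf{Sp}(2g,\mathbb Z)$ is the group of integer matrices $X$ with $X^tJX=J$, $J=\begin{pmatrix}0&I\\-I&0\end{pmatrix}$; $\mathsf{Sp}(2g,2)$ is the same over $\mathbb F_2$. $\Gamma(2g,N)$ is the kernel of $\mathsf{Sp}(2g,\mathbb Z)\to\mathsf{Sp}(2g,\mathbb Z/N)$. The Igusa subgroup $\Gamma(2g,N,2N)$ consists of the matrices $\begin{pmatrix}A&B\\C&D\end{pmatrix}\in\Gamma(2g,N)$ such that all diagonal entries of $AB^t$ and of $CD^t$ are divisible by $2N$. The quotients in question are elementary abelian $2$-groups on which $\mathsf{Sp}(2g,\mathbb Z)$ acts by conjugation, the action factoring through $\mathsf{Sp}(2g,2)$. $U=\mathbb F_2^{2g}$ is the natural module, and $\Lambda^2(U)\subseteq U\otimes U$ is the subspace spanned by the elements $u\otimes u'+u'\otimes u$. *)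

From HB Require Import structures.
From mathcomp Require Import all_boot all_order all_algebra.
Set Implicit Arguments. Unset Strict Implicit. Unset Printing Implicit Defensive.
Import Order.TTheory GRing.Theory Num.Theory.
Local Open Scope ring_scope.

Notation intmx g := 'M[int]_(g + g).

Definition Jmx (R : nzRingType) (g : nat) : 'M[R]_(g + g) :=
  block_mx 0 1%:M (- 1%:M) 0.

Definition Sp_Z (g : nat) (X : intmx g) : Prop :=
  X^T *m Jmx int g *m X = Jmx int g.

Definition Gamma (g : nat) (N : int) (X : intmx g) : Prop :=
  Sp_Z X /\ forall i j, (N %| X i j - (1%:M : intmx g) i j)%Z.

Definition Igusa (g : nat) (N : int) (X : intmx g) : Prop :=
  Gamma N X /\
  (forall i : 'I_g,
     (2 * N %| (ulsubmx X *m (ursubmx X)^T) i i)%Z /\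
     (2 * N %| (dlsubmx X *m (drsubmx X)^T) i i)%Z).

Definition red2 (g : nat) (X : intmx g) : 'M['F_2]_(g + g) :=
  map_mx (fun z : int => z%:~R) X.

Notation Umod g := 'cV['F_2]_(g + g).

(* U (x) U is identified with (2g x 2g) matrices over F_2 via
   u (x) u' |-> u *m u'^T; Lambda^2(U) is the subspace spanned by the
   elements u (x) u' + u' (x) u. *)
Definition Lambda2 (g : nat) (M : 'M['F_2]_(g + g)) : bool :=
  (mxvec M <= \sum_(u : Umod g) \sum_(v : Umod g)
                <<mxvec (u *m v^T + v *m u^T)>>)%MS.

From HB Require Import structures.
From mathcomp Require Import all_boot all_order all_algebra.
Set Implicit Arguments. Unset Strict Implicit. Unset Printing Implicit Defensive.
Import Order.TTheory GRing.Theory Num.Theory.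
Local Open Scope ring_scope.

(* Write Y in Gamma(2g,N), N = 2^n, as Y = 1 + N M.  The symplectic condition
   forces M J to be symmetric modulo 2, and since N^2 M K vanishes modulo 2N the
   map psi : Y |-> M J mod 2 is a homomorphism, with kernel Gamma(2g,2N);
   conjugation by X acts on it by psi |-> X psi X^T.  As squaring is the identity
   on F_2, the diagonal phi of the symmetric matrix psi transforms like a vector,
   phi |-> X phi, and it vanishes exactly on the Igusa subgroup.  Transvections
   1 + N w w^T J have psi = w w^T, so phi is onto U, and products of three of them
   realise the spanning vectors u v^T + v u^T of Lambda^2(U); conversely psi of an
   Igusa element is symmetric with zero diagonal, hence lies in Lambda^2(U). *)

Lemma pchar_F2 : 2%N \in [pchar 'F_2]. Proof. exact: pchar_Fp. Qed.

Lemma intr_F2_eq0 (z : int) : (z%:~R == 0 :> 'F_2) = (2 %| z)%Z.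
Proof. by rewrite (dvdz_pcharf pchar_F2). Qed.

Lemma mulrr_F2 (x : 'F_2) : x * x = x.
Proof. by case: x => [[|[|]]] //= ?; apply/val_inj. Qed.

Lemma addmx_F2 m n (A : 'M['F_2]_(m, n)) : A + A = 0.
Proof. by apply/matrixP => i j; rewrite !mxE (addrr_pchar2 pchar_F2). Qed.

Lemma oppmx_F2 m n (A : 'M['F_2]_(m, n)) : - A = A.
Proof. by apply/eqP; rewrite eq_sym -addr_eq0 addmx_F2. Qed.

Definition liftF2 m n (A : 'M['F_2]_(m, n)) : 'M[int]_(m, n) :=
  map_mx (fun x : 'F_2 => (x : nat)%:Z) A.

Lemma liftF2K m n (A : 'M['F_2]_(m, n)) : map_mx intr (liftF2 A) = A.
Proof. by apply/matrixP => i j; rewrite !mxE -natz rmorph_nat natr_Zp. Qed.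

Lemma red2E g (A : intmx g) i j : red2 A i j = (A i j)%:~R.
Proof. exact: mxE. Qed.

Lemma red2D g (A B : intmx g) : red2 (A + B) = red2 A + red2 B.
Proof. exact: map_mxD. Qed.

Lemma red2M g (A B : intmx g) : red2 (A *m B) = red2 A *m red2 B.
Proof. exact: map_mxM. Qed.

Lemma red2N g (A : intmx g) : red2 (- A) = red2 A.
Proof. by rewrite /red2 map_mxN oppmx_F2. Qed.

Lemma red2T g (A : intmx g) : red2 A^T = (red2 A)^T.
Proof. by rewrite /red2 map_trmx. Qed.

Lemma red2_eq0 g (A : intmx g) : red2 A = 0 <-> forall i j, (2 %| A i j)%Z.
Proof.
split=> [A0 i j | A2].
  by have /eqP := congr1 (fun B : 'M_(g + g) => B i j) A0; rewrite !mxE intr_F2_eq0.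
by apply/matrixP => i j; rewrite !mxE; apply/eqP; rewrite intr_F2_eq0.
Qed.

Lemma red2_scale g (c : int) (A : intmx g) : (2 %| c)%Z -> red2 (c *: A) = 0.
Proof.
move=> c2; apply/matrixP => i j.
by rewrite !mxE intrM (eqP _ : c%:~R = 0) ?mul0r ?intr_F2_eq0.
Qed.

Lemma Jmx_sqr (R : nzRingType) g : Jmx R g *m Jmx R g = - 1%:M.
Proof.
rewrite /Jmx mulmx_block !(mul0mx, mulmx0, mul1mx, mulmx1, mulmxN, addr0, add0r).
by rewrite (scalar_mx_block g g (1 : R)) opp_block_mx !oppr0.
Qed.

Lemma trmx_Jmx (R : nzRingType) g : (Jmx R g)^T = - Jmx R g.
Proof.
by rewrite /Jmx tr_block_mx !trmx0 linearN /= trmx1 opp_block_mx !oppr0 opprK.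
Qed.

Section Symplectic.

Variables (R : comUnitRingType) (g : nat).
Local Notation J := (Jmx R g).

Lemma symplM (X Y : 'M[R]_(g + g)) :
  X^T *m J *m X = J -> Y^T *m J *m Y = J -> (X *m Y)^T *m J *m (X *m Y) = J.
Proof.
by move=> hX hY; rewrite trmx_mul -!mulmxA (mulmxA X^T) (mulmxA _ X) hX mulmxA.
Qed.

Variable X : 'M[R]_(g + g).
Hypothesis sympX : X^T *m J *m X = J.

Lemma sympl_linv : - (J *m X^T *m J) *m X = 1%:M.
Proof. by rewrite mulNmx -!mulmxA (mulmxA _ _ X) sympX Jmx_sqr opprK. Qed.

Lemma sympl_unitmx : X \in unitmx.
Proof. by case: (mulmx1_unit sympl_linv). Qed.

Lemma sympl_invmx : invmx X = - (J *m X^T *m J).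
Proof.
by rewrite -[invmx X]mul1mx -sympl_linv -[LHS]mulmxA mulmxV ?sympl_unitmx // mulmx1.
Qed.

Lemma sympl_invmxJ : invmx X *m J = J *m X^T.
Proof. by rewrite sympl_invmx mulNmx -!mulmxA Jmx_sqr !mulmxN mulmx1 opprK. Qed.

Lemma sympl_tr : X *m J *m X^T = J.
Proof.
by rewrite -mulmxA -sympl_invmxJ mulmxA mulmxV ?sympl_unitmx // mul1mx.
Qed.

End Symplectic.

Section Transvection.

Variables (R : comNzRingType) (g : nat).
Local Notation J := (Jmx R g).

Lemma Jmx_form_alt (w : 'cV[R]_(g + g)) : w^T *m J *m w = 0.
Proof.
rewrite -[w](vsubmxK w) tr_col_mx /Jmx mul_row_block mul_row_col.
rewrite !(mulmx0, mulmx1, add0r, addr0, mulmxN) mulNmx addrC.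
apply/eqP; rewrite subr_eq0; apply/eqP/matrixP => i j.
by rewrite (ord1 i) (ord1 j) !mxE; apply: eq_bigr => k _; rewrite !mxE mulrC.
Qed.

Definition transvection (c : R) (w : 'cV[R]_(g + g)) : 'M[R]_(g + g) :=
  1%:M + c *: (w *m w^T *m J).

Lemma transvection_sympl c w :
  (transvection c w)^T *m J *m transvection c w = J.
Proof.
have wJw := Jmx_form_alt w.
rewrite /transvection [(1%:M + _)^T]linearD /= [(c *: _)^T]linearZ /= trmx1.
rewrite !trmx_mul trmxK trmx_Jmx mulmxDl mul1mx !mulmxDr mulmx1.
rewrite -!scalemxAl -!scalemxAr mulmxDl -scalemxAl !mulNmx.
have -> : J *m (w *m w^T) *m J *m (w *m w^T *m J) = 0.
  by rewrite -!mulmxA (mulmxA w^T) (mulmxA _ w) wJw mul0mx !mulmx0.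
by rewrite oppr0 scaler0 addr0 -addrA -scalerDr !mulmxA addNr scaler0 addr0.
Qed.

End Transvection.

Definition strict_lower (R : nmodType) n (A : 'M[R]_n) : 'M[R]_n :=
  \matrix_(k, l) if (l < k)%N then A k l else 0.

Lemma sym_lowerE (R : nmodType) n (T : 'M[R]_n) : T^T = T ->
  T = diag_mx (\row_k T k k) + (strict_lower T + (strict_lower T)^T).
Proof.
move=> symT; apply/matrixP => k l; rewrite !mxE.
case: (ltngtP k l) => [kl | lk | /val_inj <-].
- by rewrite -val_eqE /= (ltn_eqF kl) mulr0n !add0r -{1}symT mxE.
- by rewrite -val_eqE /= (gtn_eqF lk) mulr0n add0r addr0.
- by rewrite eqxx mulr1n !addr0.
Qed.

Lemma sum_delta_row (R : pzSemiRingType) m n (A : 'M[R]_(m, n)) :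
  A = \sum_i delta_mx i 0 *m row i A.
Proof.
apply/matrixP => k l; rewrite summxE (bigD1 k) //= big1 => [|i ik].
  by rewrite !mxE big_ord1 !mxE !eqxx mul1r addr0.
by rewrite !mxE big_ord1 !mxE eq_sym (negbTE ik) mul0r.
Qed.

Lemma diag_col_conj_F2 m n (P : 'M['F_2]_(m, n)) (T : 'M['F_2]_n) : T^T = T ->
  \col_i (P *m T *m P^T) i i = P *m \col_k T k k.
Proof.
move=> symT; rewrite [in LHS](sym_lowerE symT); set L := strict_lower T.
have trL : P *m L^T *m P^T = (P *m L *m P^T)^T by rewrite !trmx_mul trmxK mulmxA.
apply/matrixP => i j; rewrite (ord1 j) {j} !mulmxDr !mulmxDl trL.
have addE (A B : 'M['F_2]_m) : (A + B) i i = A i i + B i i by rewrite mxE.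
rewrite [LHS]mxE !addE [_^T i i]mxE (addrr_pchar2 pchar_F2) addr0.
rewrite mul_mx_diag !mxE; apply: eq_bigr => l _.
by rewrite !mxE mulrAC mulrr_F2.
Qed.

Lemma addmx_sqr_F2 n (u v : 'cV['F_2]_n) :
  (u + v) *m (u + v)^T + u *m u^T + v *m v^T = u *m v^T + v *m u^T.
Proof.
rewrite linearD /= mulmxDl !mulmxDr (addrC (u *m _)) addrACA.
by rewrite -[_ + _ *m _ + _]addrA -addrA addmx_F2 addr0.
Qed.

Lemma diag_col_eq0 (R : nmodType) n (A : 'M[R]_n) :
  \col_i A i i = 0 <-> forall i, A i i = 0.
Proof.
split=> [/matrixP A0 i | A0]; last by apply/matrixP => i j; rewrite !mxE A0.
by have := A0 i 0; rewrite !mxE.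
Qed.

Lemma sumsmx_ind (F : fieldType) (I : finType) m n (B : I -> 'M[F]_n)
    (P : 'M[F]_(m, n) -> Prop) :
  P 0 -> (forall r s, P r -> P s -> P (r + s)) ->
  (forall i r, (r <= B i)%MS -> P r) ->
  forall r, (r <= \sum_i B i)%MS -> P r.
Proof.
move=> P0 PD PB _ /sub_sumsmxP [c ->].
by elim/big_rec: _ => // i s _; apply/PD/(PB i)/submxMl.
Qed.

Lemma Lambda2_gen g (u v : Umod g) : Lambda2 (u *m v^T + v *m u^T).
Proof. by apply: (sumsmx_sup u) => //; apply: (sumsmx_sup v) => //; rewrite genmxE. Qed.

Lemma Lambda2_alt g (T : 'M['F_2]_(g + g)) :
  T^T = T -> (forall k, T k k = 0) -> Lambda2 T.
Proof.
move=> symT diag0; set L := strict_lower T.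
have -> : T = \sum_i (delta_mx i 0 *m row i L + (delta_mx i 0 *m row i L)^T).
  rewrite {1}(sym_lowerE symT) -/L.
  have -> : \row_k T k k = 0 by apply/matrixP => i j; rewrite !mxE diag0.
  by rewrite linear0 add0r [in LHS](sum_delta_row L) linear_sum big_split.
rewrite /Lambda2 linear_sum /=; apply: summx_sub => i _.
by rewrite trmx_mul -{1}[row i L]trmxK; apply: Lambda2_gen.
Qed.

Section Level.

Variables (g : nat) (N : int).
Local Notation J := (Jmx int g).
Implicit Types (X Y Z M K : intmx g).

Definition gamma_log Y : intmx g := map_mx (fun z => (z %/ N)%Z) (Y - 1%:M).

Definition gamma_psi Y : 'M['F_2]_(g + g) := red2 (gamma_log Y *m J).

Definition gamma_phi Y : Umod g := \col_i gamma_psi Y i i.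

Lemma Gamma_log Y : Gamma N Y -> Y = 1%:M + N *: gamma_log Y.
Proof.
case=> _ dvdN; apply/matrixP => i j; have := dvdN i j; rewrite !mxE => dvdNij.
by rewrite mulrC divzK // addrC subrK.
Qed.

Lemma Gamma_level M : Sp_Z (1%:M + N *: M) -> Gamma N (1%:M + N *: M).
Proof.
by move=> sympY; split=> // i j; rewrite !mxE (addrC (_%:R)) addrK dvdz_mulr.
Qed.

Lemma mulmx_level M K :
  (1%:M + N *: M) *m (1%:M + N *: K) = 1%:M + N *: (M + K + N *: (M *m K)).
Proof.
rewrite mulmxDl !mulmxDr !mul1mx mulmx1 -scalemxAl -scalemxAr scalerA.
by rewrite !scalerDr scalerA !addrA (addrAC _ (N *: K)).
Qed.

Lemma GammaM Y Z : Gamma N Y -> Gamma N Z -> Gamma N (Y *m Z).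
Proof.
move=> gY gZ; have sympYZ := symplM gY.1 gZ.1.
by rewrite (Gamma_log gY) (Gamma_log gZ) mulmx_level in sympYZ *; apply: Gamma_level.
Qed.

Lemma level_block_mx M :
  1%:M + N *: M = block_mx (1%:M + N *: ulsubmx M) (N *: ursubmx M)
                           (N *: dlsubmx M) (1%:M + N *: drsubmx M).
Proof.
by rewrite -{1}[M]submxK scalar_mx_block scale_block_mx add_block_mx !add0r.
Qed.

Lemma mulmxJ_ul M i : (M *m J) (lshift g i) (lshift g i) = - ursubmx M i i.
Proof.
rewrite -{1}[M]submxK /Jmx mulmx_block block_mxEul.
by rewrite mulmx0 add0r mulmxN mulmx1 mxE.
Qed.

Lemma mulmxJ_dr M i : (M *m J) (rshift g i) (rshift g i) = dlsubmx M i i.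
Proof.
by rewrite -{1}[M]submxK /Jmx mulmx_block block_mxEdr mulmx0 addr0 mulmx1.
Qed.

Lemma red2_mulJ_eq0 M : (red2 (M *m J) == 0) = (red2 M == 0).
Proof.
apply/eqP/eqP => [|M0]; last by rewrite red2M M0 mul0mx.
move/(congr1 (mulmx^~ (red2 J))).
by rewrite -red2M -mulmxA Jmx_sqr mulmxN mulmx1 red2N mul0mx.
Qed.

Hypothesis N_neq0 : N != 0.

Lemma gamma_logE M : gamma_log (1%:M + N *: M) = M.
Proof. by apply/matrixP => i j; rewrite !mxE (addrC (_%:R)) addrK mulKz. Qed.

Lemma gamma_psiE M : gamma_psi (1%:M + N *: M) = red2 (M *m J).
Proof. by rewrite /gamma_psi gamma_logE. Qed.

Hypothesis N_even : (2 %| N)%Z.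

Lemma red2_level_tr M : (1%:M + N *: M) *m J *m (1%:M + N *: M)^T = J ->
  (red2 (M *m J))^T = red2 (M *m J).
Proof.
rewrite [(1%:M + _)^T]linearD /= [(N *: _)^T]linearZ /= trmx1 mulmxDr mulmx1.
rewrite !mulmxDl mul1mx -!scalemxAl -!scalemxAr -!scalerDr.
rewrite -addrA -scalerDr -[X in _ = X]addr0 => /addrI /eqP.
rewrite scalemx_eq0 (negbTE N_neq0) => /eqP /(congr1 (@red2 g)).
rewrite !red2D red2_scale // addr0 [red2 0]map_mx0 => /eqP.
rewrite addr_eq0 oppmx_F2 => /eqP eMJ.
by rewrite -red2T trmx_mul trmx_Jmx mulNmx red2N eMJ.
Qed.

Lemma gamma_psiM Y Z : Gamma N Y -> Gamma N Z ->
  gamma_psi (Y *m Z) = gamma_psi Y + gamma_psi Z.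
Proof.
move=> gY gZ; rewrite {1}(Gamma_log gY) {1}(Gamma_log gZ) mulmx_level gamma_psiE.
by rewrite !mulmxDl !red2D -scalemxAl red2_scale // addr0.
Qed.

Lemma gamma_psi_tr Y : Gamma N Y -> (gamma_psi Y)^T = gamma_psi Y.
Proof.
move=> gY; have := sympl_tr gY.1; rewrite (Gamma_log gY) gamma_psiE.
exact: red2_level_tr.
Qed.

Lemma gamma_psiJ X Y : Sp_Z X -> Gamma N Y ->
  gamma_psi (X *m Y *m invmx X) = red2 X *m gamma_psi Y *m (red2 X)^T.
Proof.
move=> sympX gY; rewrite {1}(Gamma_log gY) mulmxDr mulmx1 mulmxDl.
rewrite mulmxV ?sympl_unitmx // -scalemxAr -scalemxAl gamma_psiE.
by rewrite -mulmxA sympl_invmxJ // !mulmxA /gamma_psi !red2M red2T !mulmxA.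
Qed.

Lemma Gamma_double Y : Gamma N Y ->
  Gamma (2 * N) Y <-> forall i j, (2 %| gamma_log Y i j)%Z.
Proof.
move=> gY; have entry i j :
    (2 * N %| Y i j - (1%:M : intmx g) i j)%Z = (2 %| gamma_log Y i j)%Z.
  by rewrite {1}(Gamma_log gY) !mxE (addrC (_%:R)) addrK mulrC dvdz_mul2r.
split=> [[_ dvdY] i j | dvdM]; first by rewrite -entry.
by split=> [|i j]; [case: gY | rewrite entry].
Qed.

Lemma gamma_psi_eq0 Y : Gamma N Y -> gamma_psi Y = 0 <-> Gamma (2 * N) Y.
Proof.
move=> gY; rewrite /gamma_psi; split.
  by move/eqP; rewrite red2_mulJ_eq0 => /eqP /red2_eq0 /(Gamma_double gY).
by move/(Gamma_double gY)/red2_eq0/eqP; rewrite -red2_mulJ_eq0 => /eqP.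
Qed.

Lemma dvdz_level (a b : int) : (2 * N %| N * (a + N * b))%Z = (2 %| a)%Z.
Proof.
have N_F2 : N%:~R = 0 :> 'F_2 by apply/eqP; rewrite intr_F2_eq0.
by rewrite mulrC dvdz_mul2r // -!intr_F2_eq0 rmorphD rmorphM /= N_F2 mul0r addr0.
Qed.

Lemma Igusa_diag Y : Gamma N Y -> Igusa N Y <-> gamma_phi Y = 0.
Proof.
move=> gY; set M := gamma_log Y.
have ul i : (2 * N %| (ulsubmx Y *m (ursubmx Y)^T) i i)%Z =
            (gamma_psi Y (lshift g i) (lshift g i) == 0).
  rewrite /gamma_psi red2E mulmxJ_ul rmorphN oppr_eq0 intr_F2_eq0 -/M.
  rewrite {1 2}(Gamma_log gY) -/M level_block_mx block_mxKul block_mxKur.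
  rewrite [(N *: _)^T]linearZ /= -scalemxAr mulmxDl mul1mx -scalemxAl.
  by rewrite !mxE dvdz_level.
have dr i : (2 * N %| (dlsubmx Y *m (drsubmx Y)^T) i i)%Z =
            (gamma_psi Y (rshift g i) (rshift g i) == 0).
  rewrite /gamma_psi red2E mulmxJ_dr intr_F2_eq0 -/M.
  rewrite {1 2}(Gamma_log gY) -/M level_block_mx block_mxKdl block_mxKdr.
  rewrite [(1%:M + _)^T]linearD /= trmx1 [(N *: _)^T]linearZ /= mulmxDr mulmx1.
  by rewrite -scalemxAl -scalemxAr -scalerDr !mxE dvdz_level.
split=> [[_ dvdY] | /diag_col_eq0 psi0]; last by split=> // i; rewrite ul dr !psi0.
apply/diag_col_eq0 => k; case: (split_ordP k) => i -> {k}; apply/eqP.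
  by rewrite -ul; case: (dvdY i).
by rewrite -dr; case: (dvdY i).
Qed.

Lemma Gamma1 : Gamma N (1%:M : intmx g).
Proof.
split=> [|i j]; first by rewrite /Sp_Z trmx1 mul1mx mulmx1.
by rewrite subrr dvdz0.
Qed.

Lemma gamma_psi1 : gamma_psi (1%:M : intmx g) = 0.
Proof.
have gamma_log1 : gamma_log 1%:M = 0.
  by apply/matrixP => i j; rewrite !mxE subrr div0z.
by rewrite /gamma_psi gamma_log1 mul0mx /red2 map_mx0.
Qed.

Lemma Gamma_transvection (w : 'cV[int]_(g + g)) : Gamma N (transvection N w).
Proof. exact/Gamma_level/transvection_sympl. Qed.

Lemma gamma_psi_transvection (w : 'cV[int]_(g + g)) :
  gamma_psi (transvection N w) = map_mx intr w *m (map_mx intr w)^T.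
Proof.
rewrite gamma_psiE -[w *m w^T *m _ *m _]mulmxA Jmx_sqr mulmxN mulmx1 red2N.
by rewrite /red2 map_mxM map_trmx.
Qed.

Lemma gamma_phiM Y Z : Gamma N Y -> Gamma N Z ->
  gamma_phi (Y *m Z) = gamma_phi Y + gamma_phi Z.
Proof.
by move=> gY gZ; rewrite /gamma_phi gamma_psiM //; apply/matrixP => i j; rewrite !mxE.
Qed.

Lemma gamma_phiJ X Y : Sp_Z X -> Gamma N Y ->
  gamma_phi (X *m Y *m invmx X) = red2 X *m gamma_phi Y.
Proof.
by move=> sympX gY; rewrite /gamma_phi gamma_psiJ // diag_col_conj_F2 // gamma_psi_tr.
Qed.

Lemma gamma_phi_transvection (u : Umod g) :
  gamma_phi (transvection N (liftF2 u)) = u.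
Proof.
apply/matrixP => i j; rewrite (ord1 j) mxE gamma_psi_transvection liftF2K.
by rewrite !mxE big_ord1 !mxE mulrr_F2.
Qed.

Lemma IgusaM Y Z : Igusa N Y -> Igusa N Z -> Igusa N (Y *m Z).
Proof.
move=> iY iZ; have [gY gZ] := (iY.1, iZ.1).
apply/(Igusa_diag (GammaM gY gZ)); rewrite gamma_phiM //.
by rewrite (proj1 (Igusa_diag gY) iY) (proj1 (Igusa_diag gZ) iZ) addr0.
Qed.

Lemma Igusa1 : Igusa N (1%:M : intmx g).
Proof.
apply/(Igusa_diag Gamma1)/diag_col_eq0 => k.
by rewrite gamma_psi1 mxE.
Qed.

Lemma Igusa_polar (u v : Umod g) :
  exists2 Y, Igusa N Y & gamma_psi Y = u *m v^T + v *m u^T.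
Proof.
pose a := liftF2 u; pose b := liftF2 v.
pose Y := transvection N (a + b) *m transvection N a *m transvection N b.
have gT w : Gamma N (transvection N w) := Gamma_transvection w.
have gY : Gamma N Y := GammaM (GammaM (gT _) (gT _)) (gT _).
have psiY : gamma_psi Y = u *m v^T + v *m u^T.
  rewrite /Y (gamma_psiM (GammaM (gT _) (gT _)) (gT _)) (gamma_psiM (gT _) (gT _)).
  by rewrite !gamma_psi_transvection map_mxD !liftF2K addmx_sqr_F2.
exists Y => //; apply/(Igusa_diag gY)/diag_col_eq0 => k.
by rewrite psiY !mxE !big_ord1 !mxE mulrC (addrr_pchar2 pchar_F2).
Qed.

Lemma gamma_psi_Lambda2 Y : Igusa N Y -> Lambda2 (gamma_psi Y).
Proof.
move=> iY; apply: Lambda2_alt; first exact: gamma_psi_tr iY.1.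
by apply/diag_col_eq0/(Igusa_diag iY.1).
Qed.

Lemma gamma_psi_Lambda2_onto (M : 'M['F_2]_(g + g)) : Lambda2 M ->
  exists2 Y, Igusa N Y & gamma_psi Y = M.
Proof.
pose P r := exists2 Y, Igusa N Y & mxvec (gamma_psi Y) = r.
suff /(_ (mxvec M)) PM : forall r, (r <= \sum_(u : Umod g) \sum_(v : Umod g)
    <<mxvec (u *m v^T + v *m u^T)>>)%MS -> P r.
  by move=> /PM [Y iY /(can_inj mxvecK) psiY]; exists Y.
have P0 : P 0 by exists 1%:M; rewrite ?gamma_psi1 ?linear0 //; apply: Igusa1.
have PD r s : P r -> P s -> P (r + s).
  move=> [Y iY <-] [Z iZ <-]; exists (Y *m Z); first exact: IgusaM.
  by rewrite gamma_psiM ?linearD //; [apply: iY.1 | apply: iZ.1].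
apply: sumsmx_ind => // u; apply: sumsmx_ind => // v r.
rewrite genmxE => /sub_rVP [a ->]; have [Y iY psiY] := Igusa_polar (a *: u) v.
exists Y => //; rewrite psiY -linearZ /= scalerDr scalemxAl scalemxAr.
by rewrite [(a *: u)^T]linearZ.
Qed.

End Level.

Unset Implicit Arguments.

Theorem proposition5p2 (g n : nat) (hg : (0 < g)%N) (hn : (0 < n)%N) :
  (* Gamma(2g,2^n) / Gamma(2g,2^n,2^(n+1)) ~= U as Sp(2g,2)-modules *)
  (exists phi : intmx g -> Umod g,
     [/\ (forall Y Z, Gamma (2 ^+ n) Y -> Gamma (2 ^+ n) Z ->
            phi (Y *m Z) = phi Y + phi Z),
         (forall u : Umod g, exists2 Y, Gamma (2 ^+ n) Y & phi Y = u),
         (forall Y, Gamma (2 ^+ n) Y -> (phi Y = 0 <-> Igusa (2 ^+ n) Y)) &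
         (forall X Y, Sp_Z X -> Gamma (2 ^+ n) Y ->
            phi (X *m Y *m invmx X) = red2 X *m phi Y)]) /\
  (* Gamma(2g,2^n,2^(n+1)) / Gamma(2g,2^(n+1)) ~= Lambda^2(U) *)
  (exists psi : intmx g -> 'M['F_2]_(g + g),
     [/\ (forall Y Z, Igusa (2 ^+ n) Y -> Igusa (2 ^+ n) Z ->
            psi (Y *m Z) = psi Y + psi Z),
         (forall Y, Igusa (2 ^+ n) Y -> Lambda2 (psi Y)),
         (forall M, Lambda2 M -> exists2 Y, Igusa (2 ^+ n) Y & psi Y = M),
         (forall Y, Igusa (2 ^+ n) Y -> (psi Y = 0 <-> Gamma (2 ^+ n.+1) Y)) &
         (forall X Y, Sp_Z X -> Igusa (2 ^+ n) Y ->
            psi (X *m Y *m invmx X) = red2 X *m psi Y *m (red2 X)^T)]).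
Proof.
have N_neq0 : 2 ^+ n != 0 :> int by rewrite expf_neq0.
have N_even : (2 %| 2 ^+ n)%Z by rewrite -(prednK hn) exprS dvdz_mulr.
split.
  exists (gamma_phi (2 ^+ n)); split.
  - exact: gamma_phiM.
  - move=> u; exists (transvection (2 ^+ n) (liftF2 u)).
      exact: Gamma_transvection.
    exact: gamma_phi_transvection.
  - by move=> Y gY; apply: iff_sym; apply: Igusa_diag.
  - exact: gamma_phiJ.
exists (gamma_psi (2 ^+ n)); split.
- by move=> Y Z iY iZ; apply: gamma_psiM iY.1 iZ.1.
- exact: gamma_psi_Lambda2.
- exact: gamma_psi_Lambda2_onto.
- by move=> Y iY; rewrite exprS; apply: gamma_psi_eq0 iY.1.
- by move=> X Y sympX iY; apply: gamma_psiJ iY.1.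
Qed.
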